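(* Let $(t_k)_{k\in\mathbb{N}}$ be a strictly increasing sequence with $t_1=\pi/4$ and $t_k\to\pi/2$. In $\mathbb{R}^3$ let $C_1=\mathrm{co}\{(-2,2,1),(-2,2,-1)\}$, $C_2=\mathrm{co}\{(2,2,1),(2,2,-1)\}$ and $C_3=\overline{\mathrm{co}}\{p_k: k\in\mathbb{N}\}$ with $p_k=(\cos t_k,\sin t_k,(-1)^k)$. Let $C_1'=\{a\}$ with $a=(-2,2)$, $C_2'=\{b\}$ with $b=(2,2)$, and $C_3'=\overline{\mathrm{co}}\{v_k:k\in\mathbb{N}\}$ with $v_k=(\cos t_k,\sin t_k)$ be their projections onto the $xy$-plane, and for $u=(x,y,z)$ write $u'=(x,y)$. Fix $\varepsilon\in(0,1]$. Then a triple $(u_1,u_2,u_3)$ is an $\varepsilon$-cycle for $C_1,C_2,C_3$ with support $(w_1,w_2,w_3)$ if and only if: (i) the six points $u_1,u_2,u_3,w_1,w_2,w_3$ lie in a common plane orthogonal to the $z$-axis, and (ii) $(u_1',u_2',u_3')$ is an $\varepsilon$-cycle for $C_1',C_2',C_3'$ with support $(w_1',w_2',w_3')$.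
   Context: For a nonempty closed convex set $C$ in a Euclidean space, $\Pi_C(u)$ denotes the Euclidean projection of $u$ onto $C$. For three nonempty closed convex sets $D_1,D_2,D_3$ (in $\mathbb{R}^3$ or $\mathbb{R}^2$) and $\varepsilon\in(0,1]$, an $\varepsilon$-cycle is a triple $(u_1,u_2,u_3)$ with $u_1=u_3+\varepsilon(\Pi_{D_1}(u_3)-u_3)$, $u_2=u_1+\varepsilon(\Pi_{D_2}(u_1)-u_1)$, $u_3=u_2+\varepsilon(\Pi_{D_3}(u_2)-u_2)$. Its support is the triple $(w_1,w_2,w_3)=(\Pi_{D_1}(u_3),\Pi_{D_2}(u_1),\Pi_{D_3}(u_2))$. $\mathrm{co}$ denotes convex hull and $\overline{\mathrm{co}}$ closed convex hull. *)

From HB Require Import structures.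
From mathcomp Require Import all_boot all_order all_algebra.
From mathcomp Require Import all_classical all_reals all_analysis.
Set Implicit Arguments. Unset Strict Implicit. Unset Printing Implicit Defensive.
Import Order.TTheory GRing.Theory Num.Theory.
Import numFieldTopology.Exports numFieldNormedType.Exports.
Local Open Scope classical_set_scope.
Local Open Scope ring_scope.

Section Defs.
Variable R : realType.

Definition is_convex (n : nat) (C : set 'rV[R]_n) :=
  forall x y (l : R), C x -> C y -> 0 <= l <= 1 -> C (l *: x + (1 - l) *: y).

Definition co (n : nat) (S : set 'rV[R]_n) : set 'rV[R]_n :=
  [set x | forall C : set 'rV[R]_n, is_convex C -> S `<=` C -> C x].

Definition cco (n : nat) (S : set 'rV[R]_n) : set 'rV[R]_n :=
  [set x | forall C : set 'rV[R]_n, is_convex C -> closed C -> S `<=` C -> C x].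

Definition sqdist (n : nat) (u v : 'rV[R]_n) : R := \sum_(i < n) (u 0 i - v 0 i) ^+ 2.

Definition nearest (n : nat) (C : set 'rV[R]_n) (u w : 'rV[R]_n) :=
  C w /\ forall c, C c -> sqdist u w <= sqdist u c.

(* Euclidean projection Pi_C(u) (well defined, i.e. the unique nearest point,
   when C is nonempty closed convex) *)
Definition eproj (n : nat) (C : set 'rV[R]_n) (u : 'rV[R]_n) : 'rV[R]_n :=
  xget 0 (nearest C u).

Definition eps_cycle (n : nat) (D1 D2 D3 : set 'rV[R]_n) (eps : R)
    (u1 u2 u3 : 'rV[R]_n) :=
  [/\ u1 = u3 + eps *: (eproj D1 u3 - u3),
      u2 = u1 + eps *: (eproj D2 u1 - u1) &
      u3 = u2 + eps *: (eproj D3 u2 - u2)].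

Definition vec3 (x y z : R) : 'rV[R]_3 := \row_(i < 3) nth 0 [:: x; y; z] i.
Definition vec2 (x y : R) : 'rV[R]_2 := \row_(i < 2) nth 0 [:: x; y] i.

Definition zc (u : 'rV[R]_3) : R := u 0 ord_max.
Definition xy (u : 'rV[R]_3) : 'rV[R]_2 := \row_(i < 2) u 0 (widen_ord (isT : (2 <= 3)%N) i).

End Defs.

(* C1 and C2 are vertical segments, so projecting onto them keeps (x, y) fixed
   and clamps the height z to [-1, 1], while C3 lies in the slab |z| <= 1.  The
   heights along an eps-cycle thus perform relaxed steps towards targets in
   [-1, 1]; a height outside the slab would move strictly towards it at the first
   step and could never return, so all heights coincide, lie in [-1, 1], and are
   shared by the supports.  Once u2 and w3 have the same height, the variational
   inequality characterising w3 loses its z-term and exhibits xy w3 as the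
   projection of xy u2 onto the closed convex hull of the projected generators.
   Conversely, the cycle equations hold coordinatewise. *)

From HB Require Import structures.
From mathcomp Require Import all_boot all_order all_algebra.
From mathcomp Require Import all_classical all_reals all_analysis.
From mathcomp Require Import ring lra.
Import Order.TTheory GRing.Theory Num.Theory.
Import numFieldTopology.Exports numFieldNormedType.Exports.
Local Open Scope classical_set_scope.
Local Open Scope ring_scope.

Section nearest_point.
Context {R : realType} {n : nat}.
Implicit Types (C : set 'rV[R]_n) (a b u v w c : 'rV[R]_n).

Definition dotp a b : R := \sum_i a 0 i * b 0 i.

Definition halfspace a b : set 'rV[R]_n := [set y | dotp a (y - b) <= 0].

Lemma sqdist_ge0 u v : 0 <= sqdist u v.
Proof. by apply: sumr_ge0 => i _; exact: sqr_ge0. Qed.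

Lemma sqdist_eq0 u v : sqdist u v = 0 -> u = v.
Proof.
move/eqP; rewrite psumr_eq0 => [/allP uv|i _]; last exact: sqr_ge0.
apply/rowP => i.
by apply/eqP; rewrite -subr_eq0 -sqrf_eq0; apply: uv; rewrite mem_index_enum.
Qed.

Lemma sqdist_segment u w c l :
  sqdist u (l *: c + (1 - l) *: w) =
  sqdist u w - 2 * l * dotp (u - w) (c - w) + l ^+ 2 * sqdist c w.
Proof.
rewrite /sqdist /dotp !mulr_sumr -sumrB -big_split /=.
by apply: eq_bigr => i _; rewrite !mxE; ring.
Qed.

Lemma sqdist_expand u w c :
  sqdist u c = sqdist u w - 2 * dotp (u - w) (c - w) + sqdist c w.
Proof.
have := sqdist_segment u w c 1.
by rewrite scale1r subrr scale0r addr0 mulr1 expr1n mul1r.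
Qed.

Lemma halfspace_convex a b : is_convex (halfspace a b).
Proof.
move=> x y l hx hy /andP[l0 l1]; rewrite /halfspace /=.
have -> : dotp a (l *: x + (1 - l) *: y - b) =
    l * dotp a (x - b) + (1 - l) * dotp a (y - b).
  rewrite /dotp !mulr_sumr -big_split /=.
  by apply: eq_bigr => i _; rewrite !mxE; ring.
rewrite /halfspace /= in hx hy; nra.
Qed.

Lemma sum_coord_continuous (F : 'I_n -> R -> R) :
  (forall i, continuous (F i)) -> continuous (fun x : 'rV[R]_n => \sum_i F i (x 0 i)).
Proof.
move=> Fc; have addR : continuous (fun z : R * R => z.1 + z.2) := add_continuous.
apply: (continuous_big addR) => i _ x.
exact (continuous_comp (@coord_continuous R 1 n 0 i x) (Fc i (x 0 i))).
Qed.

Lemma dotp_continuous a b : continuous (fun y : 'rV[R]_n => dotp a (y - b)).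
Proof.
have -> : (fun y => dotp a (y - b)) = (fun y => \sum_i a 0 i * (y 0 i - b 0 i)).
  by apply/funext => y; apply: eq_bigr => i _; rewrite !mxE.
apply: (sum_coord_continuous (fun i r => a 0 i * (r - b 0 i))) => i r.
apply: (@continuousM R R (fun _ => a 0 i) (fun r => r - b 0 i)); first exact: cvg_cst.
by apply: continuousB; [exact: cvg_id | exact: cvg_cst].
Qed.

Lemma halfspace_closed a b : closed (halfspace a b).
Proof.
have -> : halfspace a b = (fun y => dotp a (y - b)) @^-1` [set r | r <= 0] by [].
by apply: closed_comp => [y _|]; [exact: dotp_continuous | exact: closed_le].
Qed.

Lemma sqdist_continuous u : continuous (sqdist u).
Proof.
apply: (sum_coord_continuous (fun i r => (u 0 i - r) ^+ 2)) => i r.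
by apply: (@continuousM R R (fun r => u 0 i - r) (fun r => u 0 i - r));
  apply: continuousB; (exact: cvg_cst || exact: cvg_id).
Qed.

Lemma le0_of_le_small_multiples {d N : R} :
  0 <= N -> (forall l, 0 < l <= 1 -> d <= l * N) -> d <= 0.
Proof.
move=> N0 dN; rewrite leNgt; apply/negP => d0.
have Nd0 : 0 < N + d by lra.
have l0 : 0 < d / (N + d) by rewrite divr_gt0.
have l1 : d / (N + d) <= 1 by rewrite ler_pdivrMr // mul1r lerDr.
have := dN _ (introT andP (conj l0 l1)).
rewrite mulrAC ler_pdivlMr //; nra.
Qed.

Lemma nearestP {C u w} : is_convex C ->
  nearest C u w <-> C w /\ C `<=` halfspace (u - w) w.
Proof.
move=> C_convex; split=> [[Cw w_min]|[Cw C_half]]; split=> // c Cc.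
- rewrite /halfspace /=; set d := dotp _ _.
  have d_small : forall l, 0 < l <= 1 -> 2 * d <= l * sqdist c w.
    move=> l /andP[l0 l1].
    have l01 : 0 <= l <= 1 by rewrite l1 ltW.
    have := w_min _ (C_convex c w l Cc Cw l01); rewrite sqdist_segment -/d.
    by rewrite -subr_ge0; nra.
  by have := le0_of_le_small_multiples (sqdist_ge0 c w) d_small; lra.
- rewrite (sqdist_expand u w c) -addrA lerDl.
  have := C_half c Cc; rewrite /halfspace /=.
  by have := sqdist_ge0 c w; lra.
Qed.

Lemma nearest_unique C u w w' :
  is_convex C -> nearest C u w -> nearest C u w' -> w = w'.
Proof.
move=> C_convex nw [Cw' w'_min].
have [Cw w_half] := (nearestP C_convex).1 nw.
have := w_half w' Cw'; have := w'_min w Cw.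
rewrite /halfspace /= (sqdist_expand u w w') => ww' d_le0.
by apply/esym/sqdist_eq0/eqP; rewrite eq_le sqdist_ge0 andbT; lra.
Qed.

Lemma eproj_nearest C u : (exists w, nearest C u w) -> nearest C u (eproj C u).
Proof. exact: xgetPex. Qed.

Lemma eproj_eq C u w : is_convex C -> nearest C u w -> eproj C u = w.
Proof.
move=> C_convex nw.
exact: nearest_unique C_convex (eproj_nearest _ _ (ex_intro _ w nw)) nw.
Qed.

Lemma eproj_set1 a u : eproj [set a] u = a.
Proof.
have [] // : nearest [set a] u (eproj [set a] u).
by apply: eproj_nearest; exists a; split => // c ->.
Qed.

Lemma compact_nearest C u : compact C -> C !=set0 -> exists w, nearest C u w.
Proof.
move=> C_compact C_n0.
have [w Cw w_min] := EVT_min_rV C_n0 C_compact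
  (continuous_subspaceT (sqdist_continuous u)).
exists w; split; first exact: set_mem.
by move=> c Cc; apply: w_min; exact: mem_set.
Qed.

End nearest_point.

Section hulls.
Context {R : realType} {n : nat}.
Implicit Types (S K : set 'rV[R]_n).

Lemma co_min S K : is_convex K -> S `<=` K -> co S `<=` K.
Proof. by move=> K_convex SK x /(_ K K_convex SK). Qed.

Lemma co_convex S : is_convex (co S).
Proof.
move=> x y l Sx Sy l01 K K_convex SK.
exact: K_convex (Sx K K_convex SK) (Sy K K_convex SK) l01.
Qed.

Lemma cco_min S K : is_convex K -> closed K -> S `<=` K -> cco S `<=` K.
Proof. by move=> K_convex K_closed SK x /(_ K K_convex K_closed SK). Qed.

Lemma sub_cco S : S `<=` cco S.
Proof. by move=> x Sx K _ _ /(_ x Sx). Qed.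

Lemma cco_convex S : is_convex (cco S).
Proof.
move=> x y l Sx Sy l01 K K_convex K_closed SK.
exact: K_convex (Sx K K_convex K_closed SK) (Sy K K_convex K_closed SK) l01.
Qed.

Lemma cco_closed S : closed (cco S).
Proof.
have -> : cco S = \bigcap_(K in [set K | [/\ is_convex K, closed K & S `<=` K]]) K.
  by apply/seteqP; split => x Sx K; [case; exact: Sx | move=> *; exact: Sx].
by apply: closed_bigI => K [].
Qed.

Definition cube : set 'rV[R]_n := [set v | forall i, -1 <= v 0 i <= 1].

Lemma cube_convex : is_convex cube.
Proof.
move=> x y l x1 y1 /andP[l0 l1] i; rewrite !mxE.
by have /andP[? ?] := x1 i; have /andP[? ?] := y1 i; apply/andP; split; nra.
Qed.

Lemma cube_compact : compact cube.
Proof.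
have -> : cube = [set v | forall i, `[(-1 : R), 1]%classic (v ord0 i)].
  by apply/seteqP; split => v v1 i; have := v1 i; rewrite /= in_itv.
exact: rV_compact (fun _ => @segment_compact _ _ _).
Qed.

Lemma cco_sub_cube S : S `<=` cube -> cco S `<=` cube.
Proof.
apply: cco_min; first exact: cube_convex.
by apply: compact_closed => //; exact: cube_compact.
Qed.

Lemma cco_compact S : S `<=` cube -> compact (cco S).
Proof.
move=> S1; apply: (subclosed_compact (cco_closed S) cube_compact).
exact: cco_sub_cube.
Qed.

Lemma eproj_cco_nearest S u :
  S !=set0 -> S `<=` cube -> nearest (cco S) u (eproj (cco S) u).
Proof.
move=> [v Sv] S1; apply/eproj_nearest/compact_nearest; first exact: cco_compact.
by exists v; exact: sub_cco.
Qed.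

End hulls.

Section xy_plane.
Context {R : realType}.
Implicit Types (u v w : 'rV[R]_3).

Lemma xyD u v : xy (u + v) = xy u + xy v.
Proof. by apply/rowP => i; rewrite !mxE. Qed.

Lemma xyZ a u : xy (a *: u) = a *: xy u.
Proof. by apply/rowP => i; rewrite !mxE. Qed.

Lemma xyB u v : xy (u - v) = xy u - xy v.
Proof. by apply/rowP => i; rewrite !mxE. Qed.

Lemma zcD u v : zc (u + v) = zc u + zc v.
Proof. by rewrite /zc !mxE. Qed.

Lemma zcZ a u : zc (a *: u) = a * zc u.
Proof. by rewrite /zc !mxE. Qed.

Lemma zcB u v : zc (u - v) = zc u - zc v.
Proof. by rewrite /zc !mxE. Qed.

Lemma xy_vec3 (x y z : R) : xy (vec3 x y z) = vec2 x y.
Proof. by apply/rowP => -[[|[|//]] ?]; rewrite !mxE. Qed.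

Lemma zc_vec3 (x y z : R) : zc (vec3 x y z) = z.
Proof. by rewrite /zc mxE. Qed.

Lemma xy_zc_inj u v : xy u = xy v -> zc u = zc v -> u = v.
Proof.
move=> /rowP uv_xy uv_z; apply/rowP => i.
case: (unliftP ord_max i) => [j ->|->] //.
have -> : lift ord_max j = widen_ord (isT : (2 <= 3)%N) j.
  by apply: val_inj; rewrite /= /bump leqNgt ltn_ord.
by have := uv_xy j; rewrite !mxE.
Qed.

Lemma sqdist_xy_zc u v : sqdist u v = sqdist (xy u) (xy v) + (zc u - zc v) ^+ 2.
Proof.
rewrite /sqdist big_ord_recr /=; congr (_ + _); apply: eq_bigr => i _.
by rewrite !mxE; congr ((u 0 _ - v 0 _) ^+ 2); apply: val_inj.
Qed.

Lemma dotp_xy_zc u v : dotp u v = dotp (xy u) (xy v) + zc u * zc v.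
Proof.
rewrite /dotp big_ord_recr /=; congr (_ + _); apply: eq_bigr => i _.
by rewrite !mxE; congr (u 0 _ * v 0 _); apply: val_inj.
Qed.

Lemma xy_continuous : continuous (@xy R).
Proof.
move=> u A /= /nbhs_ballP [e e0 uA].
apply/nbhs_ballP; exists e => //= v [_ uv].
by apply: uA; split => // i j; rewrite !mxE.
Qed.

Lemma image_xy_vec3 {T : Type} (K : set T) (f g h : T -> R) :
  [set xy v | v in [set vec3 (f k) (g k) (h k) | k in K]] = [set vec2 (f k) (g k) | k in K].
Proof. by rewrite image_comp; apply: eq_imagel => k _; exact: xy_vec3. Qed.

Lemma relax_xy_zc u v w (e : R) : v = u + e *: (w - u) <->
  xy v = xy u + e *: (xy w - xy u) /\ zc v = zc u + e * (zc w - zc u).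
Proof.
split=> [->|[vxy vz]]; first by rewrite xyD xyZ xyB zcD zcZ zcB.
by apply: xy_zc_inj; rewrite ?xyD ?xyZ ?xyB ?zcD ?zcZ ?zcB.
Qed.

End xy_plane.

Section relaxed_cycles.
Context {R : realType}.

Definition clamp (z : R) : R := if z < -1 then -1 else if 1 < z then 1 else z.

Lemma clamp_itv z : -1 <= clamp z <= 1.
Proof.
by rewrite /clamp; case: (ltrP z (-1)) => z1; [|case: (ltrP 1 z) => z2];
  apply/andP; split; lra.
Qed.

Lemma clamp_id z : -1 <= z <= 1 -> clamp z = z.
Proof.
move=> /andP[z1 z2]; rewrite /clamp.
by case: (ltrP z (-1)) => z1'; [|case: (ltrP 1 z) => z2']; lra.
Qed.

Lemma clamp_nearest z s : -1 <= s <= 1 -> (z - clamp z) ^+ 2 <= (z - s) ^+ 2.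
Proof.
move=> /andP[s1 s2]; rewrite /clamp.
by case: (ltrP z (-1)) => z1; [|case: (ltrP 1 z) => z2];
  rewrite ?subrr ?expr0n ?sqr_ge0 //; nra.
Qed.

Lemma relax_cycle_le (e hi z1 z2 z3 a1 a2 a3 : R) : 0 < e <= 1 ->
  z1 = z3 + e * (a1 - z3) -> z2 = z1 + e * (a2 - z1) -> z3 = z2 + e * (a3 - z2) ->
  a1 <= hi -> a2 <= hi -> a3 <= hi -> z3 <= hi.
Proof.
move=> /andP[e0 e1] h1 h2 h3 a1hi a2hi a3hi; rewrite leNgt; apply/negP => z3hi.
(* Above hi every step goes down, so z3 <= z2 <= z1 < z3. *)
have z1z3 : z1 < z3 by nra.
have z2hi : hi < z2 by rewrite ltNge; apply/negP => z2hi; nra.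
have z1hi : hi < z1 by rewrite ltNge; apply/negP => z1hi; nra.
nra.
Qed.

Lemma relax_cycle_clamp {e z1 z2 z3 a : R} : 0 < e <= 1 ->
  z1 = z3 + e * (clamp z3 - z3) -> z2 = z1 + e * (clamp z1 - z1) ->
  z3 = z2 + e * (a - z2) -> -1 <= a <= 1 ->
  [/\ z1 = z3, z2 = z3 & a = z3].
Proof.
move=> e01 h1 h2 h3 /andP[a_lo a_hi].
have /andP[c3_lo c3_hi] := clamp_itv z3; have /andP[c1_lo c1_hi] := clamp_itv z1.
have z3_itv : -1 <= z3 <= 1.
  apply/andP; split; last exact: relax_cycle_le e01 h1 h2 h3 c3_hi c1_hi a_hi.
  rewrite -lerN2 opprK.
  apply: (@relax_cycle_le e 1 (- z1) (- z2) (- z3) (- clamp z3) (- clamp z1) (- a));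
    by [|lra].
have ez1 : z1 = z3 by rewrite h1 clamp_id // subrr mulr0 addr0.
have ez2 : z2 = z3 by rewrite h2 ez1 clamp_id // subrr mulr0 addr0.
split => //; have : e * (a - z3) = 0 by rewrite ez2 in h3; lra.
have e_neq0 : e != 0 by case/andP: e01 => e0 _; rewrite gt_eqF.
by move/eqP; rewrite mulf_eq0 (negbTE e_neq0) subr_eq0 => /eqP.
Qed.

End relaxed_cycles.

Section projections3.
Context {R : realType}.

Lemma co_vsegment (x0 y0 : R) :
  co [set vec3 x0 y0 1; vec3 x0 y0 (-1)] =
  [set v | xy v = vec2 x0 y0 /\ -1 <= zc v <= 1].
Proof.
apply/seteqP; split.
- apply: co_min => [v w l [vxy /andP[v1 v2]] [wxy /andP[w1 w2]] /andP[l0 l1]|].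

    rewrite /= xyD !xyZ vxy wxy -scalerDl addrC subrK scale1r zcD !zcZ.
    by split => //; apply/andP; split; nra.
  + by move=> v [->|->]; rewrite /= xy_vec3 zc_vec3; split => //; apply/andP; split; lra.
- move=> v [vxy /andP[v1 v2]] K K_convex K_ends.
  have l01 : 0 <= (1 + zc v) / 2 <= 1 by apply/andP; split; lra.
  have := K_convex _ _ _ (K_ends _ (or_introl erefl)) (K_ends _ (or_intror erefl)) l01.
  congr K; apply: xy_zc_inj.
    by rewrite xyD !xyZ !xy_vec3 -scalerDl addrC subrK scale1r vxy.
  by rewrite zcD !zcZ !zc_vec3; lra.
Qed.

Lemma eproj_vsegment (x0 y0 : R) u :
  eproj (co [set vec3 x0 y0 1; vec3 x0 y0 (-1)]) u = vec3 x0 y0 (clamp (zc u)).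
Proof.
apply: eproj_eq; first exact: co_convex.
rewrite co_vsegment; split=> [/=|c [cxy cz]].
  by rewrite xy_vec3 zc_vec3 clamp_itv.
by rewrite !sqdist_xy_zc xy_vec3 cxy zc_vec3 lerD2l clamp_nearest.
Qed.

Lemma eproj_cco_xy (S : set 'rV[R]_3) u w :
  nearest (cco S) u w -> zc w = zc u ->
  eproj (cco [set xy v | v in S]) (xy u) = xy w.
Proof.
move=> nw wz; have [Sw w_half] := (nearestP (cco_convex S)).1 nw.
have xy_cco : cco S `<=` @xy R @^-1` cco [set xy v | v in S].
  apply: cco_min.
  - move=> x y l x_in y_in l01; rewrite /preimage /= xyD !xyZ.
    exact: cco_convex.
  - by apply: closed_comp => [v _|]; [exact: xy_continuous | exact: cco_closed].
  - by move=> v Sv; apply: sub_cco; exists v.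
apply: eproj_eq; first exact: cco_convex.
apply/(nearestP (cco_convex _)); split; first exact: xy_cco.
apply: cco_min; [exact: halfspace_convex | exact: halfspace_closed |].
move=> _ [v Sv <-]; have := w_half v (sub_cco _ _ Sv).
by rewrite /halfspace /= dotp_xy_zc !xyB !zcB wz subrr mul0r addr0.
Qed.

End projections3.

Theorem proposition1 (R : realType) (t : nat -> R) (eps : R) :
  (forall k : nat, (1 <= k)%N -> t k < t k.+1) ->
  t 1%N = pi / 4 ->
  t @ \oo --> pi / 2 ->
  0 < eps <= 1 ->
  let C1 := co [set vec3 (-2) 2 1; vec3 (-2) 2 (-1)] in
  let C2 := co [set vec3 2 2 1; vec3 2 2 (-1)] in
  let C3 := cco [set vec3 (cos (t k)) (sin (t k)) ((-1) ^+ k) | k in [set k : nat | (1 <= k)%N]] in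
  let C1' := [set vec2 (-2) 2] in
  let C2' := [set vec2 2 2] in
  let C3' := cco [set vec2 (cos (t k)) (sin (t k)) | k in [set k : nat | (1 <= k)%N]] in
  forall u1 u2 u3 : 'rV[R]_3,
  let w1 := eproj C1 u3 in
  let w2 := eproj C2 u1 in
  let w3 := eproj C3 u2 in
  eps_cycle C1 C2 C3 eps u1 u2 u3 <->
  ((exists c : R, [/\ zc u1 = c, zc u2 = c, zc u3 = c &
                      [/\ zc w1 = c, zc w2 = c & zc w3 = c]]) /\
   (eps_cycle C1' C2' C3' eps (xy u1) (xy u2) (xy u3) /\
    [/\ eproj C1' (xy u3) = xy w1, eproj C2' (xy u1) = xy w2 &
        eproj C3' (xy u2) = xy w3])).
Proof.
move=> _ _ _ eps01 C1 C2 C3 C1' C2' C3' u1 u2 u3 w1 w2 w3.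
pose S3 := [set vec3 (cos (t k)) (sin (t k)) ((-1) ^+ k) | k in [set k : nat | (1 <= k)%N]].
have S3_cube : S3 `<=` cube.
  move=> _ [k _ <-] [[|[|[|//]]] ?]; rewrite mxE /= ?cos_geN1 ?cos_le1 ?sin_geN1 ?sin_le1 //.
  by rewrite -signr_odd; case: odd; rewrite ?expr0 ?expr1; apply/andP; split; lra.
have nw3 : nearest C3 u2 w3.
  by apply: eproj_cco_nearest => //; exists (vec3 (cos (t 1%N)) (sin (t 1%N)) (-1)), 1%N.
have w3_itv : -1 <= zc w3 <= 1 := cco_sub_cube _ S3_cube _ (proj1 nw3) ord_max.
have w1E : w1 = vec3 (-2) 2 (clamp (zc u3)) by exact: eproj_vsegment.
have w2E : w2 = vec3 2 2 (clamp (zc u1)) by exact: eproj_vsegment.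
rewrite /eps_cycle -/w1 -/w2 -/w3.
split=> [[/relax_xy_zc[x1 z1] /relax_xy_zc[x2 z2] /relax_xy_zc[x3 z3]]|].
- rewrite w1E w2E !zc_vec3 in z1 z2.
  have [ez1 ez2 ez3] := relax_cycle_clamp eps01 z1 z2 z3 w3_itv.
  have u3_itv : -1 <= zc u3 <= 1 by rewrite -ez3.
  have xy3 : eproj C3' (xy u2) = xy w3.
    rewrite /C3' -(image_xy_vec3 _ _ _ (fun k => (-1) ^+ k)).
    by apply: eproj_cco_xy nw3 _; rewrite ez3 ez2.
  rewrite clamp_id // in w1E; rewrite ez1 clamp_id // in w2E.
  rewrite /C1' /C2' !eproj_set1 xy3 w1E w2E !xy_vec3 !zc_vec3 in x1 x2 *.
  split; first by exists (zc u3); rewrite ez1 ez2 ez3.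
  by do !split.
- case=> [[c [zu1 zu2 zu3 [zw1 zw2 zw3]]] [[x1 x2 x3] [p1 p2 p3]]].
  by split; apply/relax_xy_zc;
    rewrite ?zu1 ?zu2 ?zu3 ?zw1 ?zw2 ?zw3 !subrr !mulr0 !addr0 -?p1 -?p2 -?p3.
Qed.
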